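(* The class $\mathbb{RBA}$ of all residuated basic algebras has the finite embeddability property: for every residuated basic algebra $\mathbf{A}$ and every finite subset $B$ of its universe, the partial subalgebra of $\mathbf{A}$ on $B$ embeds into some finite residuated basic algebra.
   Context: A residuated basic algebra (RBA) is an algebra $(\mathsf{A},\wedge,\vee,\top,\bot,\rightarrow,\leftarrow,\cdot)$ such that $(\mathsf{A},\wedge,\vee,\top,\bot)$ is a bounded distributive lattice with order $\le$ and for all $a,b,c$: $a\cdot b\le c$ iff $b\le a\rightarrow c$ iff $a\le c\leftarrow b$; $a\cdot\top\le a$; $\top\cdot a\le a$; $a\cdot b\le(a\cdot b)\cdot b$. The partial subalgebra on a finite $B\subseteq\mathsf{A}$ is $B$ with each operation of $\mathbf{A}$ restricted to those arguments in $B$ whose value lies in $B$ (constants included when they lie in $B$). An embedding of it into an algebra $\mathbf{C}$ is an injective map $h:B\to\mathbf{C}$ such that $h(f(b_1,\dots,b_k))=f^{\mathbf{C}}(h(b_1),\dots,h(b_k))$ whenever $f(b_1,\dots,b_k)$ is defined in the partial subalgebra. *)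

From Stdlib Require Import List.
Import ListNotations.

Record RBA := {
  car : Type;
  rmeet : car -> car -> car;
  rjoin : car -> car -> car;
  rtop : car;
  rbot : car;
  rimp : car -> car -> car;
  limp : car -> car -> car;
  rmul : car -> car -> car;
  meet_assoc : forall a b c, rmeet a (rmeet b c) = rmeet (rmeet a b) c;
  join_assoc : forall a b c, rjoin a (rjoin b c) = rjoin (rjoin a b) c;
  meet_comm : forall a b, rmeet a b = rmeet b a;
  join_comm : forall a b, rjoin a b = rjoin b a;
  meet_absorb : forall a b, rmeet a (rjoin a b) = a;
  join_absorb : forall a b, rjoin a (rmeet a b) = a;
  meet_distr : forall a b c, rmeet a (rjoin b c) = rjoin (rmeet a b) (rmeet a c);
  meet_top : forall a, rmeet a rtop = a;
  join_bot : forall a, rjoin a rbot = a;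
  (* residuation, with a <= b := a /\ b = a *)
  resid_r : forall a b c, rmeet (rmul a b) c = rmul a b <-> rmeet b (rimp a c) = b;
  resid_l : forall a b c, rmeet (rmul a b) c = rmul a b <-> rmeet a (limp c b) = a;
  mul_top_r : forall a, rmeet (rmul a rtop) a = rmul a rtop;
  mul_top_l : forall a, rmeet (rmul rtop a) a = rmul rtop a;
  mul_sq : forall a b, rmeet (rmul a b) (rmul (rmul a b) b) = rmul a b
}.

Definition rle (A : RBA) (a b : car A) : Prop := rmeet A a b = a.

Definition finite_RBA (C : RBA) : Prop := exists l : list (car C), forall x, In x l.

Definition partial_embedding (A : RBA) (B : list (car A)) (C : RBA)
  (h : car A -> car C) : Prop :=
  (forall x y, In x B -> In y B -> h x = h y -> x = y) /\
  (forall x y, In x B -> In y B -> In (rmeet A x y) B ->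
     h (rmeet A x y) = rmeet C (h x) (h y)) /\
  (forall x y, In x B -> In y B -> In (rjoin A x y) B ->
     h (rjoin A x y) = rjoin C (h x) (h y)) /\
  (forall x y, In x B -> In y B -> In (rimp A x y) B ->
     h (rimp A x y) = rimp C (h x) (h y)) /\
  (forall x y, In x B -> In y B -> In (limp A x y) B ->
     h (limp A x y) = limp C (h x) (h y)) /\
  (forall x y, In x B -> In y B -> In (rmul A x y) B ->
     h (rmul A x y) = rmul C (h x) (h y)) /\
  (In (rtop A) B -> h (rtop A) = rtop C) /\
  (In (rbot A) B -> h (rbot A) = rbot C).

(* The bounded sublattice L of A generated by B is finite: by distributivity its
   elements are joins of meets of subsets of B.  For z in A let γ z be the least
   element of L above z; γ is a closure operator whose fixed points are exactly L.
   Equipping L with the product γ (x · y) and the residuals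
   x \ z = ⋁ {y ∈ L | γ (x · y) ≤ z},  z / y = ⋁ {x ∈ L | γ (x · y) ≤ z}
   gives a finite residuated basic algebra: for z ∈ L we have γ (x · y) ≤ z iff
   x · y ≤ z, so residuation and the inequalities of A transfer to L.  The same
   equivalence shows that the inclusion of L into A preserves every operation
   whose value stays in L, in particular the partial subalgebra on B. *)

From Stdlib Require Import List ClassicalEpsilon ProofIrrelevance.
Import ListNotations.

Section Order.

Variable A : RBA.

Local Notation "x ≤ y" := (rle A x y) (at level 70).
Local Notation "x ⊓ y" := (rmeet A x y) (at level 40, left associativity).
Local Notation "x ⊔ y" := (rjoin A x y) (at level 50, left associativity).

Lemma meet_idem a : a ⊓ a = a.
Proof. rewrite <- (join_absorb A a a) at 2. apply meet_absorb. Qed.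

Lemma rle_refl a : a ≤ a.
Proof. apply meet_idem. Qed.

Lemma rle_antisym a b : a ≤ b -> b ≤ a -> a = b.
Proof.
  unfold rle; intros Hab Hba.
  rewrite <- Hab at 1; rewrite <- Hba at 2. apply meet_comm.
Qed.

Lemma rle_trans a b c : a ≤ b -> b ≤ c -> a ≤ c.
Proof. unfold rle; intros Hab Hbc. rewrite <- Hab, <- meet_assoc, Hbc; reflexivity. Qed.

Lemma meet_lb_l a b : a ⊓ b ≤ a.
Proof. unfold rle. rewrite (meet_comm A a b), <- meet_assoc, meet_idem; reflexivity. Qed.

Lemma meet_lb_r a b : a ⊓ b ≤ b.
Proof. unfold rle. rewrite <- meet_assoc, meet_idem; reflexivity. Qed.

Lemma meet_glb a b c : a ≤ b -> a ≤ c -> a ≤ b ⊓ c.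
Proof. unfold rle; intros Hab Hac. rewrite meet_assoc, Hab, Hac; reflexivity. Qed.

Lemma rle_join_eq a c : a ≤ c <-> a ⊔ c = c.
Proof.
  unfold rle; split; intros H.
  - rewrite <- H, join_comm, meet_comm. apply join_absorb.
  - rewrite <- H. apply meet_absorb.
Qed.

Lemma join_ub_l a b : a ≤ a ⊔ b.
Proof. apply meet_absorb. Qed.

Lemma join_ub_r a b : b ≤ a ⊔ b.
Proof. rewrite join_comm. apply meet_absorb. Qed.

Lemma join_lub a b c : a ≤ c -> b ≤ c -> a ⊔ b ≤ c.
Proof.
  rewrite !rle_join_eq; intros Hac Hbc. rewrite <- join_assoc, Hbc, Hac; reflexivity.
Qed.

Lemma bot_le a : rbot A ≤ a.
Proof. apply rle_join_eq. rewrite join_comm. apply join_bot. Qed.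

Lemma le_top a : a ≤ rtop A.
Proof. apply meet_top. Qed.

Lemma meet_distr_r a b c : (a ⊔ b) ⊓ c = (a ⊓ c) ⊔ (b ⊓ c).
Proof. rewrite meet_comm, meet_distr, (meet_comm A c a), (meet_comm A c b); reflexivity. Qed.

Lemma mul_mono_l a b y : a ≤ b -> rmul A a y ≤ rmul A b y.
Proof.
  intros Hab. apply (proj2 (resid_l A a y (rmul A b y))).
  apply rle_trans with b; [exact Hab|].
  apply (proj1 (resid_l A b y (rmul A b y))), rle_refl.
Qed.

Fixpoint meet_list (s : list (car A)) : car A :=
  match s with [] => rtop A | x :: t => x ⊓ meet_list t end.

Fixpoint join_list (s : list (car A)) : car A :=
  match s with [] => rbot A | x :: t => x ⊔ join_list t end.

Lemma meet_list_lb s x : In x s -> meet_list s ≤ x.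
Proof.
  induction s as [|y s IH]; simpl; [tauto|]. intros [<-|Hx].
  - apply meet_lb_l.
  - eapply rle_trans; [apply meet_lb_r | auto].
Qed.

Lemma meet_list_glb s z : (forall x, In x s -> z ≤ x) -> z ≤ meet_list s.
Proof.
  induction s as [|y s IH]; simpl; intros Hz; [apply le_top | apply meet_glb; auto].
Qed.

Lemma join_list_ub s x : In x s -> x ≤ join_list s.
Proof.
  induction s as [|y s IH]; simpl; [tauto|]. intros [<-|Hx].
  - apply join_ub_l.
  - eapply rle_trans; [apply IH, Hx | apply join_ub_r].
Qed.

Lemma join_list_lub s z : (forall x, In x s -> x ≤ z) -> join_list s ≤ z.
Proof.
  induction s as [|y s IH]; simpl; intros Hz; [apply bot_le | apply join_lub; auto].
Qed.

Lemma meet_list_ext s t : (forall x, In x s <-> In x t) -> meet_list s = meet_list t.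
Proof.
  intros Hst; apply rle_antisym; apply meet_list_glb; intros x Hx;
    apply meet_list_lb, Hst; assumption.
Qed.

Lemma join_list_ext s t : (forall x, In x s <-> In x t) -> join_list s = join_list t.
Proof.
  intros Hst; apply rle_antisym; apply join_list_lub; intros x Hx;
    apply join_list_ub, Hst; assumption.
Qed.

Lemma meet_list_app s t : meet_list (s ++ t) = meet_list s ⊓ meet_list t.
Proof.
  induction s as [|x s IH]; simpl.
  - rewrite meet_comm, meet_top; reflexivity.
  - rewrite IH, meet_assoc; reflexivity.
Qed.

Lemma join_list_app s t : join_list (s ++ t) = join_list s ⊔ join_list t.
Proof.
  induction s as [|x s IH]; simpl.
  - rewrite join_comm, join_bot; reflexivity.
  - rewrite IH, join_assoc; reflexivity.
Qed.

Lemma meet_join_list m t : m ⊓ join_list t = join_list (map (rmeet A m) t).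
Proof.
  induction t as [|n t IH]; simpl.
  - rewrite meet_comm. apply bot_le.
  - rewrite meet_distr, IH; reflexivity.
Qed.

Lemma join_list_meet s t :
  join_list s ⊓ join_list t = join_list (flat_map (fun m => map (rmeet A m) t) s).
Proof.
  induction s as [|m s IH]; simpl.
  - apply bot_le.
  - rewrite meet_distr_r, IH, meet_join_list, join_list_app; reflexivity.
Qed.

End Order.

Fixpoint sublists {T} (s : list T) : list (list T) :=
  match s with
  | [] => [[]]
  | b :: t => map (cons b) (sublists t) ++ sublists t
  end.

Lemma sublists_incl {T} (s p : list T) : In p (sublists s) -> incl p s.
Proof.
  revert p; induction s as [|b t IH]; simpl; intros p Hp x Hx.
  - destruct Hp as [<-|[]]; destruct Hx.
  - apply in_app_or in Hp as [Hp|Hp].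
    + apply in_map_iff in Hp as [q [<- Hq]].
      destruct Hx as [->|Hx]; [left; reflexivity | right; exact (IH q Hq x Hx)].
    + right; exact (IH p Hp x Hx).
Qed.

Lemma sublists_complete {T} (s : list T) (P : T -> Prop) :
  (forall x, P x -> In x s) -> exists p, In p (sublists s) /\ forall x, In x p <-> P x.
Proof.
  revert P; induction s as [|b t IH]; simpl; intros P HP.
  - exists []; split; [left; reflexivity|]. intros x; split; [intros [] | intros Px].
    exact (HP x Px).
  - destruct (IH (fun x => P x /\ x <> b)) as [q [Hq Hq']].
    { intros x [Px Hxb]. destruct (HP x Px) as [->|Hx]; [congruence | exact Hx]. }
    destruct (excluded_middle_informative (P b)) as [Pb|Pb].
    + exists (b :: q); split; [apply in_or_app; left; apply in_map, Hq|].
      intros x; simpl; rewrite Hq'. split; [intros [<-|[]]; auto|].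
      intros Px; destruct (excluded_middle_informative (b = x)); auto.
    + exists q; split; [apply in_or_app; right; exact Hq|].
      intros x; rewrite Hq'. split; [tauto|]. intros Px; split; [exact Px|].
      intros ->; contradiction.
Qed.

Section Generated.

Variable A : RBA.
Variable B : list (car A).

Definition meets_of : list (car A) := map (meet_list A) (sublists B).

Definition gen_lattice : list (car A) := map (join_list A) (sublists meets_of).

Lemma meet_list_in_meets_of s : incl s B -> In (meet_list A s) meets_of.
Proof.
  intros HsB. destruct (sublists_complete B (fun y => In y s) HsB) as [p [Hp Hps]].
  rewrite (meet_list_ext A s p); [apply in_map, Hp|]. intros x; rewrite Hps; tauto.
Qed.

Lemma join_list_in_gen_lattice S : incl S meets_of -> In (join_list A S) gen_lattice.
Proof.
  intros HS. destruct (sublists_complete meets_of (fun y => In y S) HS) as [p [Hp Hps]].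
  rewrite (join_list_ext A S p); [apply in_map, Hp|]. intros x; rewrite Hps; tauto.
Qed.

Lemma meets_of_inv m : In m meets_of -> exists s, incl s B /\ m = meet_list A s.
Proof.
  intros Hm. apply in_map_iff in Hm as [s [<- Hs]].
  exists s; split; [apply sublists_incl, Hs | reflexivity].
Qed.

Lemma gen_lattice_inv x : In x gen_lattice -> exists S, incl S meets_of /\ x = join_list A S.
Proof.
  intros Hx. apply in_map_iff in Hx as [S [<- HS]].
  exists S; split; [apply sublists_incl, HS | reflexivity].
Qed.

Lemma incl_gen_lattice : incl B gen_lattice.
Proof.
  intros b Hb. replace b with (join_list A [meet_list A [b]]).
  - apply join_list_in_gen_lattice. intros y [<-|[]].
    apply meet_list_in_meets_of. intros z [<-|[]]; exact Hb.
  - simpl. rewrite meet_top, join_bot; reflexivity.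
Qed.

Lemma gen_lattice_bot : In (rbot A) gen_lattice.
Proof. apply (join_list_in_gen_lattice []). intros x []. Qed.

Lemma gen_lattice_top : In (rtop A) gen_lattice.
Proof.
  replace (rtop A) with (join_list A [meet_list A []]).
  - apply join_list_in_gen_lattice. intros y [<-|[]].
    apply meet_list_in_meets_of. intros x [].
  - apply join_bot.
Qed.

Lemma gen_lattice_join x y :
  In x gen_lattice -> In y gen_lattice -> In (rjoin A x y) gen_lattice.
Proof.
  intros Hx Hy.
  destruct (gen_lattice_inv x Hx) as [S [HS ->]], (gen_lattice_inv y Hy) as [T [HT ->]].
  rewrite <- join_list_app. apply join_list_in_gen_lattice, incl_app; assumption.
Qed.

Lemma gen_lattice_meet x y :
  In x gen_lattice -> In y gen_lattice -> In (rmeet A x y) gen_lattice.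
Proof.
  intros Hx Hy.
  destruct (gen_lattice_inv x Hx) as [S [HS ->]], (gen_lattice_inv y Hy) as [T [HT ->]].
  rewrite join_list_meet. apply join_list_in_gen_lattice. intros z Hz.
  apply in_flat_map in Hz as [m [Hm Hz]]. apply in_map_iff in Hz as [n [<- Hn]].
  destruct (meets_of_inv m (HS m Hm)) as [s [Hs ->]].
  destruct (meets_of_inv n (HT n Hn)) as [t [Ht ->]].
  rewrite <- meet_list_app. apply meet_list_in_meets_of, incl_app; assumption.
Qed.

End Generated.

Definition holds (P : Prop) : bool := if excluded_middle_informative P then true else false.

Lemma holds_true (P : Prop) : holds P = true <-> P.
Proof. unfold holds; destruct (excluded_middle_informative P); split; auto; discriminate. Qed.

Section ClosureAlgebra.

Variable A : RBA.
Variable L : list (car A).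
Hypothesis L_top : In (rtop A) L.
Hypothesis L_bot : In (rbot A) L.
Hypothesis L_meet : forall x y, In x L -> In y L -> In (rmeet A x y) L.
Hypothesis L_join : forall x y, In x L -> In y L -> In (rjoin A x y) L.

Local Notation "x ≤ y" := (rle A x y) (at level 70).
Local Notation "x · y" := (rmul A x y) (at level 40, left associativity).

Lemma meet_list_in s : incl s L -> In (meet_list A s) L.
Proof. induction s as [|x s IH]; simpl; intros Hs; [exact L_top|].
  apply incl_cons_inv in Hs as [Hx Hs]. apply L_meet; auto.
Qed.

Lemma join_list_in s : incl s L -> In (join_list A s) L.
Proof. induction s as [|x s IH]; simpl; intros Hs; [exact L_bot|].
  apply incl_cons_inv in Hs as [Hx Hs]. apply L_join; auto.
Qed.

Definition closure (z : car A) : car A :=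
  meet_list A (filter (fun y => holds (z ≤ y)) L).

Lemma closure_in z : In (closure z) L.
Proof. apply meet_list_in. intros x Hx. apply filter_In in Hx; tauto. Qed.

Lemma le_closure z : z ≤ closure z.
Proof. apply meet_list_glb. intros x Hx. apply filter_In in Hx as [_ Hzx]. apply holds_true, Hzx. Qed.

Lemma closure_le z w : In w L -> (closure z ≤ w <-> z ≤ w).
Proof.
  intros Hw; split; intros Hzw.
  - eapply rle_trans; [apply le_closure | exact Hzw].
  - apply meet_list_lb, filter_In; split; [exact Hw | apply holds_true, Hzw].
Qed.

Lemma closure_id w : In w L -> closure w = w.
Proof.
  intros Hw. apply rle_antisym; [apply closure_le, rle_refl; exact Hw | apply le_closure].
Qed.

Lemma closure_mul_sq x y : closure (x · y) ≤ closure (closure (x · y) · y).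
Proof.
  apply closure_le; [apply closure_in|].
  eapply rle_trans; [apply (mul_sq A x y)|].
  eapply rle_trans; [apply mul_mono_l, le_closure | apply le_closure].
Qed.

Definition rimp_cl (x z : car A) : car A :=
  join_list A (filter (fun y => holds (closure (x · y) ≤ z)) L).

Definition limp_cl (z y : car A) : car A :=
  join_list A (filter (fun x => holds (closure (x · y) ≤ z)) L).

Lemma rimp_cl_in x z : In (rimp_cl x z) L.
Proof. apply join_list_in. intros w Hw. apply filter_In in Hw; tauto. Qed.

Lemma limp_cl_in z y : In (limp_cl z y) L.
Proof. apply join_list_in. intros w Hw. apply filter_In in Hw; tauto. Qed.

(* For [z] in [L] the closure is invisible below [z], so each joinand lies below [x → z]. *)
Lemma rimp_cl_le x z : In z L -> rimp_cl x z ≤ rimp A x z.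
Proof.
  intros Hz. apply join_list_lub. intros y Hy.
  apply filter_In in Hy as [_ Hy]. apply holds_true, (proj1 (closure_le _ _ Hz)) in Hy.
  apply (proj1 (resid_r A x y z)), Hy.
Qed.

Lemma limp_cl_le z y : In z L -> limp_cl z y ≤ limp A z y.
Proof.
  intros Hz. apply join_list_lub. intros x Hx.
  apply filter_In in Hx as [_ Hx]. apply holds_true, (proj1 (closure_le _ _ Hz)) in Hx.
  apply (proj1 (resid_l A x y z)), Hx.
Qed.

Lemma resid_r_cl a b c : In b L -> In c L -> closure (a · b) ≤ c <-> b ≤ rimp_cl a c.
Proof.
  intros Hb Hc; split; intros H.
  - apply join_list_ub, filter_In; split; [exact Hb | apply holds_true, H].
  - apply closure_le, (proj2 (resid_r A a b c)); [exact Hc|].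
    eapply rle_trans; [exact H | apply rimp_cl_le, Hc].
Qed.

Lemma resid_l_cl a b c : In a L -> In c L -> closure (a · b) ≤ c <-> a ≤ limp_cl c b.
Proof.
  intros Ha Hc; split; intros H.
  - apply join_list_ub, filter_In; split; [exact Ha | apply holds_true, H].
  - apply closure_le, (proj2 (resid_l A a b c)); [exact Hc|].
    eapply rle_trans; [exact H | apply limp_cl_le, Hc].
Qed.

Lemma rimp_cl_eq x z : In z L -> In (rimp A x z) L -> rimp_cl x z = rimp A x z.
Proof.
  intros Hz Hxz. apply rle_antisym; [apply rimp_cl_le, Hz|].
  apply resid_r_cl; [exact Hxz | exact Hz |].
  apply closure_le; [exact Hz|]. apply (proj2 (resid_r A x _ z)), rle_refl.
Qed.

Lemma limp_cl_eq z y : In z L -> In (limp A z y) L -> limp_cl z y = limp A z y.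
Proof.
  intros Hz Hzy. apply rle_antisym; [apply limp_cl_le, Hz|].
  apply resid_l_cl; [exact Hzy | exact Hz |].
  apply closure_le; [exact Hz|]. apply (proj2 (resid_l A _ y z)), rle_refl.
Qed.

Definition elt : Type := {x : car A | In x L}.

Lemma elt_eq (u v : elt) : u = v <-> proj1_sig u = proj1_sig v.
Proof.
  split; [intros ->; reflexivity|].
  destruct u, v; simpl; intros ->. f_equal. apply proof_irrelevance.
Qed.

Definition elt_meet (u v : elt) : elt :=
  exist _ (rmeet A (proj1_sig u) (proj1_sig v)) (L_meet _ _ (proj2_sig u) (proj2_sig v)).
Definition elt_join (u v : elt) : elt :=
  exist _ (rjoin A (proj1_sig u) (proj1_sig v)) (L_join _ _ (proj2_sig u) (proj2_sig v)).
Definition elt_top : elt := exist _ (rtop A) L_top.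
Definition elt_bot : elt := exist _ (rbot A) L_bot.
Definition elt_mul (u v : elt) : elt :=
  exist _ (closure (proj1_sig u · proj1_sig v)) (closure_in _).
Definition elt_rimp (u v : elt) : elt :=
  exist _ (rimp_cl (proj1_sig u) (proj1_sig v)) (rimp_cl_in _ _).
Definition elt_limp (u v : elt) : elt :=
  exist _ (limp_cl (proj1_sig u) (proj1_sig v)) (limp_cl_in _ _).

Definition closure_RBA : RBA.
Proof.
  refine {| car := elt; rmeet := elt_meet; rjoin := elt_join; rtop := elt_top;
    rbot := elt_bot; rimp := elt_rimp; limp := elt_limp; rmul := elt_mul |};
    intros; rewrite ?elt_eq; simpl.
  - apply meet_assoc.
  - apply join_assoc.
  - apply meet_comm.
  - apply join_comm.
  - apply meet_absorb.
  - apply join_absorb.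
  - apply meet_distr.
  - apply meet_top.
  - apply join_bot.
  - apply resid_r_cl; [apply (proj2_sig b) | apply (proj2_sig c)].
  - apply resid_l_cl; [apply (proj2_sig a) | apply (proj2_sig c)].
  - apply closure_le; [apply (proj2_sig a) | apply mul_top_r].
  - apply closure_le; [apply (proj2_sig a) | apply mul_top_l].
  - apply closure_mul_sq.
Defined.

(* Elements outside [L] are sent to the top; only the values on [L] matter. *)
Definition inject (x : car A) : elt :=
  match excluded_middle_informative (In x L) with
  | left Hx => exist _ x Hx
  | right _ => elt_top
  end.

Lemma inject_val x : In x L -> proj1_sig (inject x) = x.
Proof.
  intros Hx. unfold inject.
  destruct (excluded_middle_informative (In x L)); [reflexivity | contradiction].
Qed.

Lemma closure_RBA_finite : finite_RBA closure_RBA.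
Proof.
  exists (map inject L). intros [x Hx]. apply in_map_iff.
  exists x; split; [apply elt_eq, inject_val, Hx | exact Hx].
Qed.

Lemma inject_partial_embedding B :
  incl B L -> partial_embedding A B closure_RBA inject.
Proof.
  intros HBL. assert (HL : forall x, In x B -> In x L) by exact HBL.
  unfold partial_embedding; simpl.
  repeat split; intros; try apply elt_eq; simpl; rewrite ?inject_val by auto.
  - rewrite <- (inject_val x), <- (inject_val y) by auto. congruence.
  - reflexivity.
  - reflexivity.
  - symmetry; apply rimp_cl_eq; auto.
  - symmetry; apply limp_cl_eq; auto.
  - symmetry; apply closure_id; auto.
  - reflexivity.
  - reflexivity.
Qed.

End ClosureAlgebra.

Theorem mainTheorem5 :
  forall (A : RBA) (B : list (car A)),
    exists (C : RBA) (h : car A -> car C),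
      finite_RBA C /\ partial_embedding A B C h.
Proof.
  intros A B.
  exists (closure_RBA A (gen_lattice A B) (gen_lattice_top A B) (gen_lattice_bot A B)
            (gen_lattice_meet A B) (gen_lattice_join A B)).
  eexists; split.
  - apply closure_RBA_finite.
  - apply inject_partial_embedding, incl_gen_lattice.
Qed.
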